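(* For every fixed $(X,Y,Z)$, the partial gradient $X_0\mapsto\nabla_{X_0}\mathcal L_\eta(X,X_0;Y,Z)$ is $\frac3\eta$-Lipschitz continuous with respect to the Frobenius norm. Further, if $\{(X^k,X_0^k;Y^k,Z^k)\}_{k\ge0}$ is generated by ADAPD (defined in the context), then for all $k\ge0$, $$\mathcal L_\eta(X^{k+1},X_0^{k+1};Y^k,Z^k)-\mathcal L_\eta(X^{k+1},X_0^k;Y^k,Z^k)\le-\frac1{2\eta}\|X_0^{k+1}-X_0^k\|_F^2.$$
   Context: Notation: $\langle A,B\rangle=\sum_{i,j}a_{ij}b_{ij}$, $\|\cdot\|_F$ Frobenius norm, $e\in\mathbb R^N$ all-ones vector. Mixing matrix $W\in\mathbb R^{N\times N}$ of an undirected graph $\mathcal G=(\{1,\dots,N\},\mathcal E)$ with (i) $w_{ij}>0$ if $(i,j)\in\mathcal E$, $w_{ij}=0$ otherwise; (ii) $W=W^\top$; (iii) $\mathrm{null}(I-W)=\mathrm{span}\{e\}$; (iv) $-1<\lambda_N(W)\le\dots\le\lambda_2(W)<\lambda_1(W)=1$. $\sqrt{I-W}$ is the PSD square root of $I-W$. $f_i:\mathbb R^p\to\mathbb R$ differentiable; $F(X)=\frac1N\sum_if_i(x_i)$ for $X$ with rows $x_i^\top$, gradient $\nabla F(X)$ with rows $\frac1N\nabla f_i(x_i)^\top$. Augmented Lagrangian, $\eta>0$: $\mathcal L_\eta(X,X_0;Y,Z)=F(X)+\langle Y,X-X_0\rangle+\frac1{2\eta}\|X-X_0\|_F^2+\langle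 Z,\sqrt{I-W}X_0\rangle+\frac1{2\eta}\|\sqrt{I-W}X_0\|_F^2$. ADAPD: fix $\eta>0$ and non-increasing nonnegative $(\epsilon_k)_{k\ge1}$; arbitrary $X^0,X_0^0,Y^0$, $Z^0\in\mathrm{range}(\sqrt{I-W})$. For $k\ge0$: $X^{k+1}$ is any matrix such that each row $r_i^{k+1}$ of $R^{k+1}=\nabla F(X^{k+1})+Y^k+\frac1\eta(X^{k+1}-X_0^k)$ satisfies $\|r_i^{k+1}\|_2^2\le\epsilon_{k+1}/N$; $X_0^{k+1}=\frac12(WX_0^k+X^{k+1}+\eta(Y^k-\sqrt{I-W}Z^k))$, $Y^{k+1}=Y^k+\frac1\eta(X^{k+1}-X_0^{k+1})$, $Z^{k+1}=Z^k+\frac1\eta\sqrt{I-W}X_0^{k+1}$. *)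

From HB Require Import structures.
From mathcomp Require Import all_boot all_order all_algebra.
From mathcomp Require Import all_classical all_reals all_analysis.
Set Implicit Arguments. Unset Strict Implicit. Unset Printing Implicit Defensive.
Import Order.TTheory GRing.Theory Num.Theory.
Import numFieldNormedType.Exports.
Local Open Scope ring_scope.

Section Defs.
Variable R : realType.

Definition frob_inner (m n : nat) (A B : 'M[R]_(m, n)) : R :=
  \sum_(i < m) \sum_(j < n) A i j * B i j.

Definition frob (m n : nat) (A : 'M[R]_(m, n)) : R := Num.sqrt (frob_inner A A).

(* For m = 1 this is the usual gradient of a function on R^p (row vector). *)
Definition mgrad (m n : nat) (g : 'M[R]_(m, n) -> R) (A : 'M[R]_(m, n)) : 'M[R]_(m, n) :=
  \matrix_(i < m, j < n) 'D_(delta_mx i j) g A.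

Definition is_psd_sqrt (N : nat) (S A : 'M[R]_N) : Prop :=
  S^T = S /\ (forall v : 'cV[R]_N, 0 <= (v^T *m S *m v) 0 0) /\ S *m S = A.

Definition mixing_matrix (N : nat) (E : rel 'I_N) (W : 'M[R]_N) : Prop :=
  (forall i j, E i j = E j i) /\
  (forall i j, (E i j -> 0 < W i j) /\ (~~ E i j -> W i j = 0)) /\
  W^T = W /\
  (forall v : 'cV[R]_N, (1%:M - W) *m v = 0 <-> exists c : R, v = c *: const_mx 1) /\
  (forall a : R, eigenvalue W a -> -1 < a <= 1) /\ eigenvalue W 1.

Definition bigF (N p : nat) (f : 'I_N -> 'rV[R]_p -> R) (X : 'M[R]_(N, p)) : R :=
  N%:R^-1 * \sum_(i < N) f i (row i X).

Definition gradF (N p : nat) (f : 'I_N -> 'rV[R]_p -> R) (X : 'M[R]_(N, p)) : 'M[R]_(N, p) :=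
  \matrix_(i < N, j < p) (N%:R^-1 * mgrad (f i) (row i X) 0 j).

(* Augmented Lagrangian; S stands for sqrt(I - W) *)
Definition augL (N p : nat) (f : 'I_N -> 'rV[R]_p -> R) (S : 'M[R]_N) (eta : R)
  (X X0 Y Z : 'M[R]_(N, p)) : R :=
  bigF f X + frob_inner Y (X - X0) + (2 * eta)^-1 * frob (X - X0) ^+ 2
  + frob_inner Z (S *m X0) + (2 * eta)^-1 * frob (S *m X0) ^+ 2.

Definition ADAPD (N p : nat) (f : 'I_N -> 'rV[R]_p -> R) (W S : 'M[R]_N) (eta : R)
  (eps : nat -> R) (X X0 Y Z : nat -> 'M[R]_(N, p)) : Prop :=
  (exists V : 'M[R]_(N, p), Z 0%N = S *m V) /\
  forall k : nat,
    (forall i : 'I_N,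
       frob (row i (gradF f (X k.+1) + Y k + eta^-1 *: (X k.+1 - X0 k))) ^+ 2
         <= eps k.+1 / N%:R) /\
    X0 k.+1 = 2^-1 *: (W *m X0 k + X k.+1 + eta *: (Y k - S *m Z k)) /\
    Y k.+1 = Y k + eta^-1 *: (X k.+1 - X0 k.+1) /\
    Z k.+1 = Z k + eta^-1 *: (S *m X0 k.+1).

End Defs.

(** The augmented Lagrangian is a quadratic function of [X0] whose Hessian is
    [(2I - W)/eta], because [S^T S = I - W]; since a doubly stochastic [W]
    shrinks the Frobenius norm, [|<D, W D>| <= |D|^2] and the Hessian has norm
    at most [3/eta].  The [X0]-step of ADAPD is designed so that the gradient
    at the new point is [-(W D)/eta] with [D = X0^{k+1} - X0^k]; expanding the
    quadratic around the new point then gives the decrease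
    [-(2|D|^2 + <D, W D>)/(2 eta) <= -|D|^2/(2 eta)].  Since [F] does not
    depend on [X0], no regularity of the [f_i] is needed. *)

From HB Require Import structures.
From mathcomp Require Import all_boot all_order all_algebra.
From mathcomp Require Import all_classical all_reals all_analysis.
From mathcomp Require Import ring lra.
Import Order.TTheory GRing.Theory Num.Theory.
Import numFieldNormedType.Exports.
Local Open Scope ring_scope.

Set Implicit Arguments.
Unset Strict Implicit.
Unset Printing Implicit Defensive.

Section FrobeniusInner.
Variables (R : realType) (m n : nat).
Implicit Types (A B C : 'M[R]_(m, n)) (a : R).

Lemma frob_innerC A B : frob_inner A B = frob_inner B A.
Proof. by apply: eq_bigr => i _; apply: eq_bigr => j _; rewrite mulrC. Qed.

Lemma frob_innerDl A B C : frob_inner (A + B) C = frob_inner A C + frob_inner B C.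
Proof.
rewrite /frob_inner -big_split; apply: eq_bigr => i _.
by rewrite -big_split; apply: eq_bigr => j _; rewrite mxE mulrDl.
Qed.

Lemma frob_innerZl a A B : frob_inner (a *: A) B = a * frob_inner A B.
Proof.
rewrite /frob_inner mulr_sumr; apply: eq_bigr => i _.
by rewrite mulr_sumr; apply: eq_bigr => j _; rewrite mxE mulrA.
Qed.

Lemma frob_innerNl A B : frob_inner (- A) B = - frob_inner A B.
Proof. by rewrite -scaleN1r frob_innerZl mulN1r. Qed.

Lemma frob_innerDr A B C : frob_inner A (B + C) = frob_inner A B + frob_inner A C.
Proof. by rewrite frob_innerC frob_innerDl !(frob_innerC A). Qed.

Lemma frob_innerZr a A B : frob_inner A (a *: B) = a * frob_inner A B.
Proof. by rewrite frob_innerC frob_innerZl frob_innerC. Qed.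

Lemma frob_innerNr A B : frob_inner A (- B) = - frob_inner A B.
Proof. by rewrite frob_innerC frob_innerNl frob_innerC. Qed.

Lemma frob_inner_ge0 A : 0 <= frob_inner A A.
Proof. by apply: sumr_ge0 => i _; apply: sumr_ge0 => j _; exact: sqr_ge0. Qed.

Lemma frob_innerDD A B :
  frob_inner (A + B) (A + B) = frob_inner A A + 2 * frob_inner A B + frob_inner B B.
Proof. by rewrite !(frob_innerDl, frob_innerDr) (frob_innerC B A); ring. Qed.

Lemma frob_inner_delta_mx A i j : frob_inner A (delta_mx i j) = A i j.
Proof.
rewrite /frob_inner (bigD1 i) //= [X in _ + X]big1 => [|k ki]; last first.
  by apply: big1 => l _; rewrite mxE (negbTE ki) mulr0.
rewrite addr0 (bigD1 j) //= [X in _ + X]big1 => [|l lj]; last first.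
  by rewrite mxE (negbTE lj) andbF mulr0.
by rewrite mxE !eqxx mulr1 addr0.
Qed.

Lemma frob_sqr A : frob A ^+ 2 = frob_inner A A.
Proof. by rewrite sqr_sqrtr // frob_inner_ge0. Qed.

Lemma frobZ a A : 0 <= a -> frob (a *: A) = a * frob A.
Proof.
move=> a_ge0; rewrite /frob frob_innerZl frob_innerZr mulrA sqrtrM ?mulr_ge0 //.
by rewrite -expr2 sqrtr_sqr ger0_norm.
Qed.

End FrobeniusInner.

Lemma frob_inner_mulmxl (R : realType) m k n (M : 'M[R]_(m, k)) (A : 'M[R]_(k, n)) B :
  frob_inner (M *m A) B = frob_inner A (M^T *m B).
Proof.
rewrite /frob_inner.
transitivity (\sum_(i < m) \sum_(j < n) \sum_(l < k) M i l * A l j * B i j).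
  apply: eq_bigr => i _; apply: eq_bigr => j _; rewrite mxE mulr_suml.
  by apply: eq_bigr => l _.
rewrite exchange_big /=.
transitivity (\sum_(j < n) \sum_(l < k) \sum_(i < m) M i l * A l j * B i j).
  by apply: eq_bigr => j _; rewrite exchange_big.
rewrite exchange_big /=; apply: eq_bigr => l _; apply: eq_bigr => j _.
by rewrite mxE mulr_sumr; apply: eq_bigr => i _; rewrite !mxE; ring.
Qed.

Lemma sqr_convex_comb_le (R : realType) N (w x : 'I_N -> R) :
  (forall j, 0 <= w j) -> \sum_j w j = 1 ->
  (\sum_j w j * x j) ^+ 2 <= \sum_j w j * x j ^+ 2.
Proof.
move=> w_ge0 w_sum1; set mu := \sum_j w j * x j.
have : 0 <= \sum_j w j * (x j - mu) ^+ 2.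
  by apply: sumr_ge0 => j _; rewrite mulr_ge0 // sqr_ge0.
have -> : \sum_j w j * (x j - mu) ^+ 2 =
    \sum_j w j * x j ^+ 2 - 2 * mu * \sum_j w j * x j + mu ^+ 2 * \sum_j w j.
  rewrite [2 * mu * _]mulr_sumr [mu ^+ 2 * _]mulr_sumr -sumrB -big_split /=.
  by apply: eq_bigr => j _; ring.
by rewrite w_sum1 -/mu; lra.
Qed.

Section DoublyStochastic.
Variables (R : realType) (N p : nat) (W : 'M[R]_N).
Hypotheses (W_ge0 : forall i j, 0 <= W i j)
  (W_row_sum : forall i, \sum_j W i j = 1) (W_col_sum : forall j, \sum_i W i j = 1).
Implicit Types D : 'M[R]_(N, p).

Lemma frob_inner_stochastic_le D : frob_inner (W *m D) (W *m D) <= frob_inner D D.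
Proof.
apply: le_trans (_ : \sum_(i < N) \sum_(c < p) \sum_(j < N) W i j * D j c ^+ 2 <= _).
  apply: ler_sum => i _; apply: ler_sum => c _; rewrite -expr2 mxE.
  exact: sqr_convex_comb_le.
rewrite (eq_bigr (fun i => \sum_(j < N) \sum_(c < p) W i j * D j c ^+ 2)); last first.
  by move=> i _; rewrite exchange_big.
rewrite exchange_big /= le_eqVlt; apply/orP; left; apply/eqP.
apply: eq_bigr => j _; rewrite exchange_big /=; apply: eq_bigr => c _.
by rewrite -mulr_suml W_col_sum mul1r expr2.
Qed.

Lemma frob_inner_stochastic_ge D : - frob_inner D D <= frob_inner D (W *m D).
Proof.
have := frob_inner_ge0 (D + W *m D); rewrite frob_innerDD.
by have := frob_inner_stochastic_le D; lra.
Qed.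

Lemma frob_scale2_sub_stochastic_le D : frob (2 *: D - W *m D) <= 3 * frob D.
Proof.
have sqr_le : frob_inner (2 *: D - W *m D) (2 *: D - W *m D) <= 3 ^+ 2 * frob_inner D D.
  rewrite frob_innerDD !(frob_innerZl, frob_innerZr, frob_innerNl, frob_innerNr).
  have := frob_inner_stochastic_le D; have := frob_inner_stochastic_ge D; lra.
rewrite /frob; apply: le_trans (ler_wsqrtr sqr_le) _.
by rewrite sqrtrM ?sqr_ge0 // sqrtr_sqr ger0_norm.
Qed.

End DoublyStochastic.

Section MixingMatrix.
Variables (R : realType) (N : nat) (E : rel 'I_N) (W : 'M[R]_N).
Hypothesis W_mixing : mixing_matrix E W.

Lemma mixing_matrix_ge0 i j : 0 <= W i j.
Proof.
have [_ [/(_ i j) [W_pos W_0] _]] := W_mixing.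
by case: (boolP (E i j)) => Eij; [exact/ltW/W_pos | rewrite W_0].
Qed.

Lemma mixing_matrix_row_sum i : \sum_j W i j = 1.
Proof.
have [_ [_ [_ [null_IW _]]]] := W_mixing.
have := (null_IW (const_mx 1)).2 (ex_intro _ 1 (esym (scale1r _))).
rewrite mulmxBl mul1mx => /subr0_eq /matrixP /(_ i 0).
by rewrite !mxE => ->; apply: eq_bigr => j _; rewrite mxE mulr1.
Qed.

Lemma mixing_matrix_col_sum j : \sum_i W i j = 1.
Proof.
have [_ [_ [W_sym _]]] := W_mixing.
by rewrite -(mixing_matrix_row_sum j); apply: eq_bigr => i _; rewrite -[in LHS]W_sym mxE.
Qed.

End MixingMatrix.

Lemma psd_sqrt_mulTmx (R : realType) N p (W S : 'M[R]_N) (A : 'M[R]_(N, p)) :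
  is_psd_sqrt S (1%:M - W) -> S^T *m (S *m A) = A - W *m A.
Proof. by move=> [S_sym [_ SS]]; rewrite S_sym mulmxA SS mulmxBl mul1mx. Qed.

Section DeriveQuadratic.
Local Open Scope classical_set_scope.

Lemma derive_quadratic (R : realType) (V : normedModType R) (g : V -> R) (A v : V) (a b : R) :
  (forall h : R, g (A + h *: v) = g A + h * a + h ^+ 2 * b) -> 'D_v g A = a.
Proof.
move=> g_quad; apply: cvg_lim => //.
have quotient_eq : {near 0^', (fun h : R => a + h * b) =1
    (fun h => h^-1 *: ((g \o shift A) (h *: v) - g A))}.
  near=> h; have h_neq0 : h != 0 by near: h; exact: nbhs_dnbhs_neq.
  by rewrite /= [h *: v + A]addrC g_quad /GRing.scale /=; field.
apply: cvg_trans (near_eq_cvg quotient_eq) _.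
suff : (fun h : R => a + h * b) @ 0^' --> a + 0 * b by rewrite mul0r addr0.
apply: cvgD; first exact: cvg_cst.
by apply: cvgMl; exact: cvg_within.
Unshelve. all: by end_near.
Qed.

End DeriveQuadratic.

Section AugmentedLagrangian.
Variables (R : realType) (N p : nat) (f : 'I_N -> 'rV[R]_p -> R) (S : 'M[R]_N) (eta : R).
Implicit Types X U D Y Z : 'M[R]_(N, p).

Definition augL_grad X U Y Z : 'M[R]_(N, p) :=
  - Y - eta^-1 *: (X - U) + S^T *m Z + eta^-1 *: (S^T *m (S *m U)).

Lemma augL_expand X U D Y Z :
  augL f S eta X (U + D) Y Z = augL f S eta X U Y Z + frob_inner (augL_grad X U Y Z) D
    + (2 * eta)^-1 * (frob_inner D D + frob_inner (S *m D) (S *m D)).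
Proof.
rewrite /augL /augL_grad opprD addrA mulmxDr !frob_sqr.
rewrite !(frob_innerDD, frob_innerDl, frob_innerDr, frob_innerNl, frob_innerNr,
  frob_innerZl, frob_inner_mulmxl, trmxK) invfM.
by set e := eta^-1; field.
Qed.

Lemma mgrad_augL X U Y Z : mgrad (fun V => augL f S eta X V Y Z) U = augL_grad X U Y Z.
Proof.
apply/matrixP => i j; rewrite mxE -frob_inner_delta_mx.
apply: (derive_quadratic (b := (2 * eta)^-1 * (frob_inner (delta_mx i j) (delta_mx i j)
  + frob_inner (S *m delta_mx i j) (S *m delta_mx i j)))) => h.
rewrite augL_expand -scalemxAr !(frob_innerZl, frob_innerZr).
by congr (_ + _); ring.
Qed.

End AugmentedLagrangian.

Section ADAPDStep.
Variables (R : realType) (N p : nat) (f : 'I_N -> 'rV[R]_p -> R).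
Variables (E : rel 'I_N) (W S : 'M[R]_N) (eta : R).
Hypotheses (W_mixing : mixing_matrix E W) (S_sqrt : is_psd_sqrt S (1%:M - W)).
Hypothesis eta_gt0 : 0 < eta.
Implicit Types X U V Y Z : 'M[R]_(N, p).

Let W_ge0 := mixing_matrix_ge0 W_mixing.
Let W_row_sum := mixing_matrix_row_sum W_mixing.
Let W_col_sum := mixing_matrix_col_sum W_mixing.

Lemma augL_grad_lipschitz X U V Y Z :
  frob (augL_grad S eta X U Y Z - augL_grad S eta X V Y Z) <= 3 / eta * frob (U - V).
Proof.
have -> : augL_grad S eta X U Y Z - augL_grad S eta X V Y Z
    = eta^-1 *: (2 *: (U - V) - W *m (U - V)).
  rewrite /augL_grad !(psd_sqrt_mulTmx _ S_sqrt) !mulmxBr.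
  by apply/matrixP => i j; rewrite !mxE; ring.
have inv_eta_ge0 : 0 <= eta^-1 by rewrite invr_ge0 ltW.
rewrite frobZ // [3 / eta]mulrC -mulrA ler_wpM2l //.
exact: frob_scale2_sub_stochastic_le.
Qed.

Lemma augL_grad_ADAPD_step X U V Y Z :
  V = 2^-1 *: (W *m U + X + eta *: (Y - S *m Z)) ->
  augL_grad S eta X V Y Z = - eta^-1 *: (W *m (V - U)).
Proof.
have [S_sym _] := S_sqrt.
move=> ->; rewrite /augL_grad (psd_sqrt_mulTmx _ S_sqrt) S_sym mulmxBr.
set WV := W *m (2^-1 *: _); set WU := W *m U; set SZ := S *m Z.
apply/matrixP => i j; rewrite !mxE.
by field; rewrite gt_eqF.
Qed.

Lemma augL_ADAPD_decrease X U V Y Z :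
  V = 2^-1 *: (W *m U + X + eta *: (Y - S *m Z)) ->
  augL f S eta X V Y Z - augL f S eta X U Y Z <= - ((2 * eta)^-1 * frob (V - U) ^+ 2).
Proof.
have [_ [_ [W_sym _]]] := W_mixing.
move=> V_step; set D := V - U.
have -> : U = V + - D by rewrite /D opprB addrC subrK.
rewrite augL_expand (augL_grad_ADAPD_step V_step) -/D mulmxN.
rewrite !(frob_innerNl, frob_innerNr, opprK, frob_innerZl, frob_inner_mulmxl).
rewrite (psd_sqrt_mulTmx _ S_sqrt) frob_innerDr frob_innerNr frob_sqr W_sym.
have W_decay := frob_inner_stochastic_ge W_ge0 W_row_sum W_col_sum D.
have c_ge0 : 0 <= (2 * eta)^-1 by rewrite invr_ge0 mulr_ge0 // ltW.
have inv_eta : eta^-1 = 2 * (2 * eta)^-1 by rewrite invfM mulrA divff ?mul1r ?pnatr_eq0.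
have : 0 <= (2 * eta)^-1 * (frob_inner D D + frob_inner D (W *m D)).
  by rewrite mulr_ge0 //; lra.
by rewrite inv_eta; lra.
Qed.

End ADAPDStep.

Theorem lemma8 (R : realType) (N p : nat) (E : rel 'I_N) (W S : 'M[R]_N)
  (f : 'I_N -> 'rV[R]_p -> R) (eta : R) :
  mixing_matrix E W ->
  is_psd_sqrt S (1%:M - W) ->
  (forall i x, differentiable (f i) x) ->
  0 < eta ->
  (forall X Y Z X0 X0' : 'M[R]_(N, p),
     frob (mgrad (fun U => augL f S eta X U Y Z) X0
           - mgrad (fun U => augL f S eta X U Y Z) X0')
       <= 3 / eta * frob (X0 - X0')) /\
  (forall (eps : nat -> R) (X X0 Y Z : nat -> 'M[R]_(N, p)),
     (forall k, 0 <= eps k.+1) ->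
     (forall k, eps k.+2 <= eps k.+1) ->
     ADAPD f W S eta eps X X0 Y Z ->
     forall k : nat,
       augL f S eta (X k.+1) (X0 k.+1) (Y k) (Z k)
         - augL f S eta (X k.+1) (X0 k) (Y k) (Z k)
       <= - ((2 * eta)^-1 * frob (X0 k.+1 - X0 k) ^+ 2)).
Proof.
move=> W_mixing S_sqrt _ eta_gt0; split.
  move=> X Y Z U U'; rewrite !mgrad_augL.
  exact: (augL_grad_lipschitz W_mixing S_sqrt eta_gt0 X U U' Y Z).
move=> eps X X0 Y Z _ _ [_ ADAPD_step] k.
have [_ [X0_step _]] := ADAPD_step k.
exact: (augL_ADAPD_decrease f W_mixing S_sqrt eta_gt0 X0_step).
Qed.
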